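(* Let $n\ge0$ and $w,u\in S_n$. Assume that the compositions $\beta=(\beta_1,\dots,\beta_p):=\operatorname{cLRM}'(w)$ and $\gamma=(\gamma_1,\dots,\gamma_p):=\operatorname{cLRM}'(u)$ are anagrams of one another, and let $\chi\in S_p$ satisfy $\beta_{\chi(i)}=\gamma_i$ for each $i\in[p]$. Let $v\in S_n$ be a permutation that sends each $\operatorname{Set}(\gamma)_i$ to $\operatorname{Set}(\beta)_{\chi(i)}$ and has V-shape on each $\operatorname{Set}(\gamma)_i$ (equivalently, the word $\underline{v(1)}\,\underline{v(2)}\cdots\underline{v(n)}$ appears in the expansion of the product $V^{\operatorname{Set}(\beta)_{\chi(1)}}\cdots V^{\operatorname{Set}(\beta)_{\chi(p)}}$ in the free algebra). Assume that $vu=w$. Then $\chi=\mathrm{id}$, $v=\mathrm{id}$ and $\gamma=\beta$.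
   Context: $S_n$ is the symmetric group on $[n]$, with product $(uw)(i)=u(w(i))$. $\operatorname{LRM}(w)=\{i\in[n]: w(k)>i\text{ for all }k<w^{-1}(i)\}$ (left-to-right minima), $\operatorname{LRM}'(w)=\{\ell-1:\ell\in\operatorname{LRM}(w),\ \ell>1\}\subseteq[n-1]$, and $\operatorname{cLRM}'(w)=\operatorname{Comp}(\operatorname{LRM}'(w))$, where for $I=\{i_1<\cdots<i_{p-1}\}\subseteq[n-1]$, $\operatorname{Comp}(I)=(i_1-i_0,\dots,i_p-i_{p-1})$ with $i_0=0$, $i_p=n$. Compositions are anagrams if they have the same multiset of parts. For a composition $\alpha=(\alpha_1,\dots,\alpha_p)$ of $n$, $\alpha_{\le i}=\alpha_1+\cdots+\alpha_i$ and $\operatorname{Set}(\alpha)_i=\{\alpha_{\le i-1}+1,\dots,\alpha_{\le i}\}$. A permutation $v$ has V-shape on an interval $\{i,i+1,\dots,j\}$ if there is $m$ with $i\le m\le j$ and $v(i)>v(i+1)>\cdots>v(m)<v(m+1)<\cdots<v(j)$. In the free algebra over letters $\underline1,\dots,\underline n$, $[a,b]=ab-ba$ and for nonempty $S\subseteq[n]$ with elements $s_1<\cdots<s_k$, $V^S=[[\cdots[\underline{s_1},\underline{s_2}],\dots],\underline{s_k}]$. *)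

(* Conventions: [n] = {1,...,n} is encoded as 'I_n via
   k |-> k-1 (0-based).  S_n is 'S_n = {perm 'I_n}. *)
From mathcomp Require Import all_boot all_order all_fingroup.
Set Implicit Arguments. Unset Strict Implicit. Unset Printing Implicit Defensive.

Definition LRM n (w : 'S_n) : {set 'I_n} :=
  [set i : 'I_n | [forall k : 'I_n, (k < (w^-1)%g i) ==> (i < w k)]].

(* LRM'(w) = {l-1 : l in LRM(w), l > 1}.  If l is 1-based, its 0-based code
   is l-1, so LRM'(w) is the increasing list of 0-based codes i > 0 of LRM(w)
   (read as elements of [n-1]). *)
Definition LRMp n (w : 'S_n) : seq nat :=
  [seq val i | i <- enum 'I_n & (i \in LRM w) && (0 < val i)].

Definition Comp (n : nat) (I : seq nat) : seq nat :=
  pairmap (fun a b => b - a) 0 (rcons I n).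

Definition cLRMp n (w : 'S_n) : seq nat := Comp n (LRMp w).

(* Set(alpha)_i, with i 0-based (i.e. the paper's Set(alpha)_{i+1}) and
   entries 0-based: {alpha_{<= i} + 1, ..., alpha_{<= i+1}} shifted by -1. *)
Definition SetC n (alpha : seq nat) (i : nat) : {set 'I_n} :=
  [set x : 'I_n | (sumn (take i alpha) <= x) && (x < sumn (take i.+1 alpha))].

Definition Vshape n (v : 'S_n) (S : {set 'I_n}) : Prop :=
  exists2 m, m \in S &
    (forall x y : 'I_n, x \in S -> y \in S -> x < y -> y <= m -> v y < v x) /\
    (forall x y : 'I_n, x \in S -> y \in S -> m <= x -> x < y -> v x < v y).

From mathcomp Require Import all_boot all_order all_fingroup.
From mathcomp Require Import zify.
Set Implicit Arguments. Unset Strict Implicit. Unset Printing Implicit Defensive.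

(* The blocks of cLRM'(w) start exactly at the left-to-right minima
   0 = b_0 < b_1 < ... < b_(p-1) of w, and every entry of w to the left of
   b_k is at least b_(k+1); so w^-1(b_k) is the first position at which w
   takes a value below b_(k+1).  By descending induction on k, assume v fixes
   every value >= b_(k+1) (a common bound for u and w).  Then u and w agree at
   all positions carrying such values, so the first position below b_(k+1) is
   the same for both, and v maps the k-th block start c_k of u to b_k.  Block
   compatibility forces chi(k) = k, hence equal block lengths and c_k = b_k.
   As v(c_k) is the least value of the block, the V-shape of v on it has its
   minimum at c_k, so v increases on the block, which it maps to itself:
   v is the identity there. *)

Lemma incr_interval_id (f : nat -> nat) (a b : nat) :
  (forall x y, a <= x -> x < y -> y < b -> f x < f y) ->
  (forall x, a <= x < b -> a <= f x < b) ->
  forall x, a <= x < b -> f x = x.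
Proof.
move=> f_incr f_range.
have gap d x : a <= x -> x + d < b -> f x + d <= f (x + d).
  elim: d => [|d IH] ax xdb; first by rewrite !addn0.
  have := f_incr (x + d) (x + d.+1); have := IH ax; lia.
move=> x /andP[ax xb].
have := gap (x - a) a (leqnn a); rewrite subnKC //.
have := gap (b.-1 - x) x ax; rewrite subnKC; last by lia.
have := f_range a; have := f_range b.-1; lia.
Qed.

Section LeftToRightMinima.
Variable n : nat.
Implicit Types w : 'S_n.

Lemma mem_LRMp w (x : 'I_n) : (val x \in LRMp w) = (x \in LRM w) && (0 < x).
Proof.
apply/mapP/idP => [[y]|xP]; last by exists x; rewrite // mem_filter xP mem_enum.
by rewrite mem_filter mem_enum andbT => yP /val_inj ->.
Qed.

Lemma LRMp_bounds w a : a \in LRMp w -> 0 < a < n.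
Proof.
by case/mapP=> x; rewrite mem_filter => /andP[/andP[_ x_gt0] _] ->; rewrite x_gt0 /=.
Qed.

Lemma LRMp_sorted w : sorted ltn (LRMp w).
Proof.
rewrite /LRMp sorted_map; apply: sorted_filter; first exact: ltn_trans.
by rewrite -sorted_map val_enum_ord iota_ltn_sorted.
Qed.

Lemma size_cLRMp w : size (cLRMp w) = (size (LRMp w)).+1.
Proof. by rewrite /cLRMp /Comp size_pairmap size_rcons. Qed.

Lemma LRM_first_below w (t : nat) (j : 'I_n) : w j < t ->
  exists j' : 'I_n, [/\ j' <= j, w j' < t & w j' \in LRM w].
Proof.
move=> wj_lt.
case: (@arg_minnP _ j (fun j' => w j' < t) val wj_lt) => j' wj'_lt j'_min.
exists j'; split => //; first exact: j'_min.
rewrite inE permK; apply/forallP => k; apply/implyP => kj'.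
rewrite ltnNge; apply/negP => wk_le.
by have := j'_min k (leq_ltn_trans wk_le wj'_lt); rewrite leqNgt kj'.
Qed.

End LeftToRightMinima.

(* Stated for n.+1: for n = 0 the list [:: 0; 0] of block starts is not
   strictly increasing. *)
Section BlockStarts.
Variable n : nat.
Implicit Types w : 'S_n.+1.

(* The paper's beta_(<= i) for beta = cLRM'(w). *)
Definition block_start w i := nth 0 (0 :: rcons (LRMp w) n.+1) i.

Lemma block_starts_sorted w : sorted ltn (0 :: rcons (LRMp w) n.+1).
Proof.
rewrite /= rcons_path (path_sortedE ltn_trans) LRMp_sorted andbT.
apply/andP; split; first by apply/allP => a /LRMp_bounds /andP[].
by case/predU1P: (mem_last 0 (LRMp w)) => [->|/LRMp_bounds /andP[]].
Qed.

Lemma ltn_block_start w i j : i <= size (cLRMp w) -> j <= size (cLRMp w) ->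
  (block_start w i < block_start w j) = (i < j).
Proof.
have lt_start i' j' : i' < j' -> j' <= size (cLRMp w) ->
    block_start w i' < block_start w j'.
  move=> ij jp; apply: (sorted_ltn_nth ltn_trans) => //; first exact: block_starts_sorted.
    by rewrite inE /= size_rcons -size_cLRMp; lia.
  by rewrite inE /= size_rcons -size_cLRMp; lia.
move=> ip jp; case: (ltngtP i j) => [ij|ji|->]; first exact: lt_start.
  by apply/negbTE; rewrite -leqNgt ltnW // lt_start.
by rewrite ltnn.
Qed.

Lemma leq_block_start w i j : i <= size (cLRMp w) -> j <= size (cLRMp w) ->
  (block_start w i <= block_start w j) = (i <= j).
Proof. by move=> ip jp; rewrite leqNgt ltn_block_start // -leqNgt. Qed.

Lemma block_start_size w : block_start w (size (cLRMp w)) = n.+1.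
Proof. by rewrite size_cLRMp /block_start /= nth_rcons ltnn eqxx. Qed.

Lemma block_start_lt w i : i < size (cLRMp w) -> block_start w i < n.+1.
Proof. by move=> ip; rewrite -(block_start_size w) ltn_block_start // ltnW. Qed.

Lemma sumn_take_pairmap_sub a s i : path leq a s -> i <= size s ->
  sumn (take i (pairmap (fun x y => y - x) a s)) + a = nth 0 (a :: s) i.
Proof.
elim: s a i => [|b s IH] a [|i] //= /andP[ab bs] ip.
by rewrite -(IH b i bs ip); lia.
Qed.

Lemma mem_SetC w i (x : 'I_n.+1) : i < size (cLRMp w) ->
  (x \in SetC n.+1 (cLRMp w) i) = (block_start w i <= x < block_start w i.+1).
Proof.
rewrite size_cLRMp => ip.
have sorted_leq := sub_sorted (fun a b => @ltnW a b) (block_starts_sorted w).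
rewrite inE /cLRMp /Comp -[sumn (take i _)]addn0 -[sumn (take i.+1 _)]addn0.
by rewrite !sumn_take_pairmap_sub ?size_rcons // ltnW.
Qed.

Lemma block_start_mem_SetC w i (ip : i < size (cLRMp w)) :
  Ordinal (block_start_lt ip) \in SetC n.+1 (cLRMp w) i.
Proof. by rewrite mem_SetC //= leqnn ltn_block_start ?ltnSn // ltnW. Qed.

Lemma nth_cLRMp w i : i < size (cLRMp w) ->
  nth 0 (cLRMp w) i = block_start w i.+1 - block_start w i.
Proof. by rewrite size_cLRMp => ip; rewrite /cLRMp /Comp (nth_pairmap 0) ?size_rcons. Qed.

Lemma LRM_block_startP w (x : 'I_n.+1) :
  reflect (exists2 i, i < size (cLRMp w) & val x = block_start w i) (x \in LRM w).
Proof.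
apply: (iffP idP) => [xL|[[|i] ip xE]].
- case: (posnP x) => [x0|x_gt0]; first by exists 0; rewrite ?size_cLRMp.
  have xLp : val x \in LRMp w by rewrite mem_LRMp xL.
  exists (index (val x) (LRMp w)).+1; first by rewrite size_cLRMp ltnS index_mem.
  by rewrite /block_start /= nth_rcons index_mem xLp nth_index.
- rewrite inE; apply/forallP => k; apply/implyP; rewrite xE lt0n.
  apply: contraTneq => wk0; have wkx : w k = x by apply: val_inj; rewrite xE.
  by rewrite -wkx permK ltnn.
- move: ip; rewrite size_cLRMp ltnS => ip.
  have : val x \in LRMp w by rewrite xE /block_start /= nth_rcons ip mem_nth.
  by rewrite mem_LRMp => /andP[].
Qed.

Lemma before_block_start w k (c j : 'I_n.+1) : k < size (cLRMp w) ->
  val c = block_start w k -> j < (w^-1)%g c -> block_start w k.+1 <= w j.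
Proof.
move=> kp cE j_lt; rewrite leqNgt; apply/negP => wj_lt.
have [j' [j'j wj'_lt /LRM_block_startP[i ip wj'E]]] := LRM_first_below wj_lt.
have cL : c \in LRM w by apply/LRM_block_startP; exists k.
move: cL; rewrite inE => /forallP /(_ j') /implyP /(_ (leq_ltn_trans j'j j_lt)).
rewrite cE wj'E ltn_block_start ?(ltnW ip) ?(ltnW kp) // => ki.
by move: wj'_lt; rewrite wj'E ltn_block_start ?(ltnW ip) // ltnS leqNgt ki.
Qed.

End BlockStarts.

Section Rigidity.
Variables (n p : nat) (w u v : 'S_n.+1) (chi : 'S_p).
Hypotheses (size_w : size (cLRMp w) = p) (size_u : size (cLRMp u) = p).
Hypothesis chi_sizes : forall i : 'I_p, nth 0 (cLRMp w) (chi i) = nth 0 (cLRMp u) i.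
Hypothesis v_blocks : forall (i : 'I_p) (x : 'I_n.+1),
  x \in SetC n.+1 (cLRMp u) i -> v x \in SetC n.+1 (cLRMp w) (chi i).
Hypothesis v_Vshape : forall i : 'I_p, Vshape v (SetC n.+1 (cLRMp u) i).
Hypothesis vu_w : forall x, v (u x) = w x.

Definition fixed_from k := [/\ forall i : 'I_p, k <= i -> chi i = i,
  block_start u k = block_start w k &
  forall x : 'I_n.+1, block_start u k <= x -> v x = x].

Lemma fixed_from_size : fixed_from p.
Proof.
split=> [i|//|x]; first by rewrite leqNgt ltn_ord.
  by rewrite -{1}size_u -size_w !block_start_size.
by rewrite -size_u block_start_size leqNgt ltn_ord.
Qed.

Section Step.
Variable k : nat.
Hypothesis k_lt_p : k < p.
Hypothesis start_eq : block_start u k.+1 = block_start w k.+1.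
Hypothesis v_fixed : forall x : 'I_n.+1, block_start u k.+1 <= x -> v x = x.

Let k_u : k < size (cLRMp u). Proof. by rewrite size_u. Qed.
Let k_w : k < size (cLRMp w). Proof. by rewrite size_w. Qed.

Lemma v_ltn_start (y : 'I_n.+1) :
  y < block_start u k.+1 -> v y < block_start u k.+1.
Proof.
rewrite !ltnNge; apply: contra => vy_ge.
by have /perm_inj <- := v_fixed vy_ge.
Qed.

Lemma v_block_start (c : 'I_n.+1) :
  val c = block_start u k -> val (v c) = block_start w k.
Proof.
(* Both u^-1(c) and w^-1(b) are the first position at which w takes a value
   below block_start u k.+1. *)
move=> cE; pose b : 'I_n.+1 := Ordinal (block_start_lt k_w).
have u_before (j : 'I_n.+1) : j < (u^-1)%g c -> block_start u k.+1 <= w j.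
  by move=> j_lt; rewrite -vu_w v_fixed // (before_block_start k_u cE j_lt).
have w_before (j : 'I_n.+1) : j < (w^-1)%g b -> block_start u k.+1 <= w j.
  by rewrite start_eq; apply: before_block_start.
have w_at_u : w ((u^-1)%g c) < block_start u k.+1.
  by rewrite -vu_w permKV v_ltn_start // cE ltn_block_start // ltnW.
have w_at_w : w ((w^-1)%g b) < block_start u k.+1.
  by rewrite permKV start_eq /= ltn_block_start // ltnW.
suff posE : (u^-1)%g c = (w^-1)%g b
  by have := vu_w ((u^-1)%g c); rewrite permKV posE permKV => ->.
apply: val_inj; case: (ltngtP ((u^-1)%g c) ((w^-1)%g b)) => // pos_lt.
  by have := w_before _ pos_lt; rewrite leqNgt w_at_u.
by have := u_before _ pos_lt; rewrite leqNgt w_at_w.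
Qed.

Lemma chi_fixed : chi (Ordinal k_lt_p) = Ordinal k_lt_p.
Proof.
have c_in : _ \in SetC n.+1 (cLRMp u) (Ordinal k_lt_p) := block_start_mem_SetC k_u.
have chi_lt : chi (Ordinal k_lt_p) < size (cLRMp w) by rewrite size_w.
have := v_blocks c_in; rewrite mem_SetC // v_block_start //.
rewrite leq_block_start ?ltn_block_start ?(ltnW k_w) ?(ltnW chi_lt) //.
by rewrite ltnS -eqn_leq => /eqP chiE; apply: val_inj.
Qed.

Lemma block_start_eq : block_start u k = block_start w k.
Proof.
have := chi_sizes (Ordinal k_lt_p); rewrite chi_fixed /= !nth_cLRMp // start_eq.
have : block_start u k < block_start u k.+1 by rewrite ltn_block_start // ltnW.
have : block_start w k < block_start w k.+1 by rewrite ltn_block_start // ltnW.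
rewrite start_eq; lia.
Qed.

Lemma v_id_on_block (x : 'I_n.+1) :
  block_start u k <= x < block_start u k.+1 -> v x = x.
Proof.
pose kp := Ordinal k_lt_p.
have in_block (y : 'I_n.+1) : (y \in SetC n.+1 (cLRMp u) kp) =
    (block_start u k <= y < block_start u k.+1) by rewrite mem_SetC.
have v_block (y : 'I_n.+1) : y \in SetC n.+1 (cLRMp u) kp ->
    block_start u k <= v y < block_start u k.+1.
  by move/v_blocks; rewrite chi_fixed mem_SetC // block_start_eq start_eq.
pose c := Ordinal (block_start_lt k_u).
have c_in : c \in SetC n.+1 (cLRMp u) kp := block_start_mem_SetC k_u.
have [m m_in [v_dec v_inc]] := v_Vshape kp.
have m_start : val m = block_start u k.
  move: (m_in); rewrite in_block => /andP[m_ge _].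
  apply/eqP; rewrite eqn_leq m_ge andbT leqNgt; apply/negP => c_lt_m.
  have := v_dec c m c_in m_in c_lt_m (leqnn m).
  rewrite ltnNge (@v_block_start c erefl) -block_start_eq.
  by case/andP: (v_block m m_in) => ->.
have v_incr (y y' : 'I_n.+1) : block_start u k <= y -> y < y' ->
    y' < block_start u k.+1 -> v y < v y'.
  move=> y_ge yy' y'_lt; apply: v_inc; rewrite ?in_block ?m_start //; lia.
have t_le : block_start u k.+1 <= n.+1.
  by rewrite -(block_start_size u) leq_block_start.
suff f_id : forall y, block_start u k <= y < block_start u k.+1 ->
    val (v (inord y)) = y.
  by move=> x_in; apply: val_inj; have := f_id x x_in; rewrite inord_val.
apply: incr_interval_id => [y y' y_ge yy' y'_lt|y y_in].
  by apply: v_incr; rewrite !inordK //; lia.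
by apply: v_block; rewrite in_block inordK; lia.
Qed.

End Step.

Lemma fixed_from_pred k : k < p -> fixed_from k.+1 -> fixed_from k.
Proof.
move=> k_lt_p [chi_fixed_above start_eq v_fixed]; split.
- move=> i; rewrite leq_eqVlt => /predU1P[ki|]; last exact: chi_fixed_above.
  have -> : i = Ordinal k_lt_p by apply: val_inj.
  exact: chi_fixed.
- exact: block_start_eq.
- move=> x x_ge; case: (ltnP x (block_start u k.+1)) => x_lt; last exact: v_fixed.
  by apply: (v_id_on_block k_lt_p start_eq v_fixed); rewrite x_ge.
Qed.

Lemma fixed_from0 : fixed_from 0.
Proof.
suff /(_ p (leqnn p)) : forall d, d <= p -> fixed_from (p - d) by rewrite subnn.
elim=> [|d IH] d_le; first by rewrite subn0; exact: fixed_from_size.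
by apply: fixed_from_pred; [lia | rewrite -subSn // subSS; apply: IH; lia].
Qed.

End Rigidity.

Theorem lemma5p2 (n p : nat) (w u v : 'S_n) (chi : 'S_p) :
  size (cLRMp w) = p ->
  size (cLRMp u) = p ->
  perm_eq (cLRMp w) (cLRMp u) ->
  (forall i : 'I_p, nth 0 (cLRMp w) (chi i) = nth 0 (cLRMp u) i) ->
  (forall (i : 'I_p) (x : 'I_n),
      x \in SetC n (cLRMp u) i -> v x \in SetC n (cLRMp w) (chi i)) ->
  (forall i : 'I_p, Vshape v (SetC n (cLRMp u) i)) ->
  (forall x : 'I_n, v (u x) = w x) ->
  [/\ chi = 1%g, v = 1%g & cLRMp u = cLRMp w].
Proof.
(* The anagram hypothesis follows from the one on chi. *)
move=> size_w size_u _ chi_sizes v_blocks v_Vshape vu_w.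
case: n => [|n] in w u v size_w size_u chi_sizes v_blocks v_Vshape vu_w *.
  have p1 : p = 1 by rewrite -size_w size_cLRMp /LRMp enum_ord0.
  have -> : u = w by apply/permP => -[].
  split=> //; last by apply/permP => -[].
  by clear -p1 chi; subst p; apply/permP => i; rewrite perm1 (ord1 (chi i)) (ord1 i).
have [chi_id _ v_id] := fixed_from0 size_w size_u chi_sizes v_blocks v_Vshape vu_w.
have v1 : v = 1%g by apply/permP => x; rewrite perm1 v_id.
have -> : u = w by apply/permP => x; rewrite -vu_w v1 perm1.
by split=> //; apply/permP => i; rewrite perm1 chi_id.
Qed.
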